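(* Let $n\ge1$, $\theta_y=y\pi/n$ for $y=0,\dots,n-1$. The set of pairs $(\mathsf T_n,\mathsf W_n)$ attainable by LHS assemblages $\{\rho_{b|y}\}$ on $\mathbb C^2$ is exactly the convex polygon whose vertices are the $2(n+1)$ points (coinciding at $k=0$) $$\left(\frac kn,\ \pm\frac{\sin\left(\frac{\pi}{2}\frac kn\right)}{n\sin\left(\frac{\pi}{2n}\right)}\right),\qquad k=0,1,\dots,n,$$ and each of these points is an extreme point of the set.
   Context: An LHS assemblage on $\mathbb C^2$ with inputs $y\in\{0,\dots,n-1\}$ and outcomes $b\in\{0,1,\varnothing\}$ is $\rho_{b|y}=\sum_\lambda p(b|y,\lambda)\rho_\lambda$, where $\{\rho_\lambda\}$ is a finite family of positive semidefinite $2\times2$ matrices with $\sum_\lambda\mathrm{tr}\rho_\lambda=1$ and $p(b|y,\lambda)$ are conditional probabilities. With $Z,X$ the Pauli matrices, define $\mathsf W_n:=\frac1n\sum_{y=0}^{n-1}\mathrm{tr}\big[(\cos\theta_y Z+\sin\theta_y X)(\rho_{0|y}-\rho_{1|y})\big]$ and $\mathsf T_n:=\frac1n\sum_{y=0}^{n-1}\mathrm{tr}(\rho_{0|y}+\rho_{1|y})$. *)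

From HB Require Import structures.
From mathcomp Require Import all_boot all_order all_algebra.
From mathcomp Require Import all_classical all_reals all_analysis.
From mathcomp.real_closed Require Import complex.
Set Implicit Arguments. Unset Strict Implicit. Unset Printing Implicit Defensive.
Import Order.TTheory GRing.Theory Num.Theory.
Local Open Scope ring_scope.

Section Defs.
Variable R : realType.
Local Notation C := R[i].

Definition adjmx (p q : nat) (A : 'M[C]_(p, q)) : 'M[C]_(q, p) := (map_mx (fun z : C => conjc z) A)^T.

(** positive semidefinite 2x2 complex matrix: Hermitian and v^* A v >= 0 for all v
    (in R[i], [0 <= z] means z is real and nonnegative). *)
Definition psd (A : 'M[C]_2) : Prop :=
  adjmx A = A /\ forall v : 'cV[C]_2, 0 <= ((adjmx v) *m A *m v) ord0 ord0.

Definition PauliZ : 'M[C]_2 := \matrix_(i < 2, j < 2)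
  (if i == j then (if i == ord0 then 1 else -1) else 0).
Definition PauliX : 'M[C]_2 := \matrix_(i < 2, j < 2)
  (if i == j then 0 else 1).

(** Outcomes b ∈ {0, 1, ∅} are encoded as 'I_3 with 2 standing for ∅. *)
Definition out0 : 'I_3 := @Ordinal 3 0 isT.
Definition out1 : 'I_3 := @Ordinal 3 1 isT.

Definition LHS_model (n m : nat) (rho : 'I_m -> 'M[C]_2)
    (p : 'I_n -> 'I_3 -> 'I_m -> R) : Prop :=
  (forall l, psd (rho l)) /\
  \sum_(l < m) \tr (rho l) = 1 /\
  (forall y b l, 0 <= p y b l) /\
  (forall y l, \sum_(b < 3) p y b l = 1).

Definition assemblage (n m : nat) (rho : 'I_m -> 'M[C]_2)
    (p : 'I_n -> 'I_3 -> 'I_m -> R) (y : 'I_n) (b : 'I_3) : 'M[C]_2 :=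
  \sum_(l < m) (p y b l)%:C%C *: rho l.

Definition theta (n : nat) (y : 'I_n) : R := (y%:R * pi) / n%:R.

Definition obs (n : nat) (y : 'I_n) : 'M[C]_2 :=
  (cos (theta y))%:C%C *: PauliZ + (sin (theta y))%:C%C *: PauliX.

(** T_n and W_n (real parts of traces that are real for Hermitian assemblages) *)
Definition Tn (n : nat) (A : 'I_n -> 'I_3 -> 'M[C]_2) : R :=
  n%:R^-1 * \sum_(y < n) @complex.Re R (\tr (A y out0 + A y out1)).
Definition Wn (n : nat) (A : 'I_n -> 'I_3 -> 'M[C]_2) : R :=
  n%:R^-1 * \sum_(y < n) @complex.Re R (\tr (obs y *m (A y out0 - A y out1))).

Definition attainable (n : nat) : set (R * R) :=
  [set tw | exists (m : nat) (rho : 'I_m -> 'M[C]_2) (p : 'I_n -> 'I_3 -> 'I_m -> R),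
      LHS_model rho p /\ tw = (Tn (assemblage rho p), Wn (assemblage rho p))].

Definition vertex (n : nat) (k : 'I_n.+1) (s : bool) : R * R :=
  (k%:R / n%:R,
   (if s then 1 else -1) * sin (pi / 2 * (k%:R / n%:R)) / (n%:R * sin (pi / (2 * n%:R)))).

Definition polygon (n : nat) : set (R * R) :=
  [set x | exists w : 'I_n.+1 -> bool -> R,
      (forall k s, 0 <= w k s) /\
      \sum_(k < n.+1) \sum_(s : bool) w k s = 1 /\
      x = (\sum_(k < n.+1) \sum_(s : bool) w k s * (@vertex n k s).1,
           \sum_(k < n.+1) \sum_(s : bool) w k s * (@vertex n k s).2)].

Definition extreme_point (S : set (R * R)) (x : R * R) : Prop :=
  S x /\ forall (u v : R * R) (t : R), S u -> S v -> 0 < t < 1 ->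
    x = (t * u.1 + (1 - t) * v.1, t * u.2 + (1 - t) * v.2) -> u = x /\ v = x.

End Defs.

From HB Require Import structures.
From mathcomp Require Import all_boot all_order all_algebra.
From mathcomp Require Import all_classical all_reals all_analysis.
From mathcomp.real_closed Require Import complex.
From mathcomp Require Import ring lra zify.
Import Order.TTheory GRing.Theory Num.Theory.
Local Open Scope ring_scope.

(* A hidden state is t (1 + z Z + x X) / 2 with z^2 + x^2 <= t^2; under input y it
   adds q_y t to n T and d_y (z cos theta_y + x sin theta_y) to n W, where q_y is the
   probability of a conclusive answer and |d_y| <= q_y.  The directions theta_y are
   pi/n apart, so any j of the numbers |z cos theta_y + x sin theta_y| add up to at
   most S_j t with S_j = sin (j pi / 2n) / sin (pi / 2n): remove the two extreme
   directions and use sin a + sin b <= 2 cos ((b - a) / 2).  As S is concave, this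
   yields n |W| <= S_k + (S_(k+1) - S_k) (n T - k) for every k < n, and these edge
   inequalities cut out the convex hull of the points (k/n, +-S_k/n).  Conversely,
   the pure state bisecting theta_0, ..., theta_(k-1), answering deterministically
   for y < k and with the empty outcome otherwise, attains the vertex k, and mixing
   such states realizes the whole hull.  Every vertex lies on two supporting lines
   that are not parallel (consecutive edges have strictly decreasing slopes), so it
   is extreme. *)

Section Trigonometry.
Context {R : realType}.

Lemma sinD_subr_sinB (a d : R) : sin (a + d) - sin (a - d) = 2 * cos a * sin d.
Proof. by rewrite sinB sinD; ring. Qed.

Lemma sinB_addr_sinD (a d : R) : sin (a - d) + sin (a + d) = 2 * sin a * cos d.
Proof. by rewrite sinB sinD; ring. Qed.

Lemma ltr_cos_pi (x y : R) : 0 <= x -> x < y -> y <= pi -> cos y < cos x.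
Proof.
move=> x0 xy ypi.
have Hx : x \in `[0, pi] by rewrite in_itv /= x0 (le_trans (ltW xy) ypi).
have Hy : y \in `[0, pi] by rewrite in_itv /= ypi (le_trans x0 (ltW xy)).
by rewrite ltr_cos.
Qed.

Lemma ler_cos_pi (x y : R) : 0 <= x -> x <= y -> y <= pi -> cos y <= cos x.
Proof.
move=> x0; rewrite le_eqVlt => /predU1P[-> //|xy] ypi.
exact/ltW/ltr_cos_pi.
Qed.

Lemma normr_sinDpin (x : R) (m : nat) : `|sin (x + pi *+ m)| = `|sin x|.
Proof. by rewrite (alternatingn (@sinDpi R)) normrM normrX normrN1 expr1n mul1r. Qed.

Lemma polar_coord (z x : R) : exists phi, 0 <= phi <= pi *+ 2 /\
  z = Num.sqrt (z ^+ 2 + x ^+ 2) * cos phi /\ x = Num.sqrt (z ^+ 2 + x ^+ 2) * sin phi.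
Proof.
set r := Num.sqrt (z ^+ 2 + x ^+ 2).
have r2 : r ^+ 2 = z ^+ 2 + x ^+ 2 by rewrite sqr_sqrtr // addr_ge0 // sqr_ge0.
have pi0 := pi_gt0 R.
have [r0|rnz] := eqVneq r 0.
  exists 0; rewrite r0 !mul0r; split; first by rewrite lexx /=; lra.
  by split; apply/eqP; rewrite -sqrf_eq0; apply/eqP; move: r2; rewrite r0; nra.
have rp : 0 < r by rewrite lt_def rnz sqrtr_ge0.
set u := z / r.
have u1 : -1 <= u <= 1.
  have : u ^+ 2 <= 1.
    by rewrite /u expr_div_n ler_pdivrMr ?exprn_gt0 // mul1r r2 lerDl sqr_ge0.
  by move=> ?; apply/andP; split; nra.
have s2 : 1 - u ^+ 2 = (x / r) ^+ 2.
  rewrite /u !expr_div_n; apply: (@mulIf _ (r ^+ 2)); first by rewrite expf_neq0.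
  by rewrite mulrBl !divfK ?expf_neq0 // mul1r r2; ring.
have sin_acos_u : sin (acos u) = `|x| / r.
  by rewrite sin_acos // s2 sqrtr_sqr normrM normrV ?unitfE // (gtr0_norm rp).
have cos_acos_u : r * cos (acos u) = z.
  by rewrite acosK ?in_itv //= /u mulrC divfK // lt0r_neq0.
have [x0|x0] := leP 0 x.
  exists (acos u); split; first by rewrite acos_ge0 // (le_trans (acos_lepi u1)) //; lra.
  by rewrite cos_acos_u sin_acos_u ger0_norm // mulrC divfK // lt0r_neq0.
exists (pi *+ 2 - acos u); split; first by have := acos_ge0 u1; have := acos_lepi u1; lra.
rewrite addrC cosD2pi sinD2pi cosN sinN cos_acos_u sin_acos_u ltr0_norm //.
by rewrite mulrN mulrC divfK ?opprK // lt0r_neq0.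
Qed.

End Trigonometry.

Lemma sum_ord2 (V : nmodType) (F : 'I_2 -> V) : \sum_(i < 2) F i = F ord0 + F ord_max.
Proof. by rewrite big_ord_recr big_ord1; congr (F _ + _); apply: val_inj. Qed.

Lemma sum_ord_ltn {V : nmodType} {k m : nat} (F : nat -> V) : (k <= m)%N ->
  \sum_(y < m) (if (y < k)%N then F y else 0) = \sum_(y < k) F y.
Proof. by move=> km; rewrite (big_ord_widen m F km) [RHS]big_mkcond. Qed.

Section Qubit.
Context {R : realType}.
Local Notation C := R[i].
Local Notation Re := (@complex.Re R).

Lemma ReD (u v : C) : Re (u + v) = Re u + Re v.
Proof. by case: u; case: v. Qed.

Lemma Re_sum (I : finType) (F : I -> C) : Re (\sum_i F i) = \sum_i Re (F i).
Proof. exact: (big_morph _ ReD (erefl : Re 0 = 0)). Qed.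

Lemma Re_realM (r : R) (w : C) : Re (r%:C%C * w) = r * Re w.
Proof. by case: w => a b /=; ring. Qed.

Lemma mxtrace2 (M : 'M[C]_2) : \tr M = M ord0 ord0 + M ord_max ord_max.
Proof. exact: sum_ord2. Qed.

Lemma Re_mxtrace_obs n (y : 'I_n) (M : 'M[C]_2) : Re (\tr (obs R y *m M)) =
  cos (theta R y) * (Re (M ord0 ord0) - Re (M ord_max ord_max))
  + sin (theta R y) * (Re (M ord0 ord_max) + Re (M ord_max ord0)).
Proof.
rewrite mxtrace2 !mxE !sum_ord2 !mxE /=.
by case: (M ord0 ord0) (M ord0 ord_max) (M ord_max ord0) (M ord_max ord_max)
  => ? ? [? ?] [? ?] [? ?] /=; ring.
Qed.

Lemma psd2_quadratic {M : 'M[C]_2} : psd M -> forall s u : R,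
  0 <= s ^+ 2 * Re (M ord0 ord0) + s * u * (Re (M ord0 ord_max) + Re (M ord_max ord0))
       + u ^+ 2 * Re (M ord_max ord_max).
Proof.
move=> [_ M_ge0] s u.
pose v : 'cV[C]_2 := \col_i (if i == ord0 then s%:C%C else u%:C%C).
have := M_ge0 v; rewrite lecE => /andP[_].
rewrite !mxE !sum_ord2 !mxE !sum_ord2 !mxE /=.
by case: (M ord0 ord0) (M ord0 ord_max) (M ord_max ord0) (M ord_max ord_max)
  => ? ? [? ?] [? ?] [? ?] /=; lra.
Qed.

(* (A + D, A - D, B) are the trace and the Z-, X-components of the Bloch vector of M. *)
Lemma psd2_bloch {M : 'M[C]_2} : psd M ->
  let A := Re (M ord0 ord0) in let D := Re (M ord_max ord_max) in
  let B := Re (M ord0 ord_max) + Re (M ord_max ord0) in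
  0 <= A + D /\ (A - D) ^+ 2 + B ^+ 2 <= (A + D) ^+ 2.
Proof.
move=> /psd2_quadratic Q A D B.
have A0 : 0 <= A by have := Q 1 0; lra.
have D0 : 0 <= D by have := Q 0 1; lra.
have discr : B ^+ 2 <= 4 * A * D.
  have QA := Q B (- 2 * A); have QD := Q (2 * D) (- B); rewrite -/A -/B -/D in QA QD.
  have [Apos|A_le0] := ltP 0 A; first nra.
  have [Dpos|D_le0] := ltP 0 D; first nra.
  by have := Q 1 1; have := Q 1 (-1); rewrite -/A -/B -/D; nra.
by split; nra.
Qed.

Lemma psd_real_outer (a : R) (u : 'I_2 -> R) : 0 <= a ->
  psd (\matrix_(i, j) (a * u i * u j)%:C%C).
Proof.
move=> a0; split.
  by rewrite /adjmx; apply/matrixP => i j; rewrite !mxE conjc_real; congr (_%:C%C); ring.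
move=> v; rewrite !mxE !sum_ord2 !mxE !sum_ord2 !mxE lecE.
case: (v ord0 ord0) (v ord_max ord0) => [x0 y0] [x1 y1] /=.
have := mulr_ge0 a0 (sqr_ge0 (u ord0 * x0 + u ord_max * x1)).
have := mulr_ge0 a0 (sqr_ge0 (u ord0 * y0 + u ord_max * y1)).
by move=> ? ?; apply/andP; split; [apply/eqP; ring | lra].
Qed.

End Qubit.

Section Assemblage.
Context {R : realType}.
Local Notation Re := (@complex.Re R).
Variables (n m : nat) (rho : 'I_m -> 'M[R[i]]_2) (p : 'I_n -> 'I_3 -> 'I_m -> R).

Lemma Tn_assemblage : Tn (assemblage rho p) =
  n%:R^-1 * \sum_(y < n) \sum_(l < m) (p y out0 l + p y out1 l) * Re (\tr (rho l)).
Proof.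
congr (_ * _); apply: eq_bigr => y _.
rewrite /assemblage -big_split /= [X in Re X]linear_sum Re_sum; apply: eq_bigr => l _.
by rewrite -scalerDl linearZ /= -rmorphD Re_realM.
Qed.

Lemma Wn_assemblage : Wn (assemblage rho p) =
  n%:R^-1 * \sum_(y < n) \sum_(l < m) (p y out0 l - p y out1 l) * Re (\tr (obs R y *m rho l)).
Proof.
congr (_ * _); apply: eq_bigr => y _.
rewrite /assemblage -sumrB mulmx_sumr [X in Re X]linear_sum Re_sum; apply: eq_bigr => l _.
by rewrite -scalerBl -scalemxAr linearZ /= -rmorphB Re_realM.
Qed.

End Assemblage.

Lemma outcome_prob_bounds {R : realType} {p : 'I_3 -> R} :
    (forall b, 0 <= p b) -> \sum_b p b = 1 ->
  0 <= p out0 + p out1 <= 1 /\ `|p out0 - p out1| <= p out0 + p out1.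
Proof.
move=> p_ge0 p_sum1; have p0 := p_ge0 out0; have p1 := p_ge0 out1.
have p2 := p_ge0 ord_max; move: p_sum1; rewrite !big_ord_recr big_ord0 /= add0r.
have -> : widen_ord (leqnSn 2) (widen_ord (leqnSn 1) ord_max) = out0 by apply: val_inj.
have -> : widen_ord (leqnSn 2) ord_max = out1 by apply: val_inj.
by move=> ?; rewrite ler_norml; split; apply/andP; split; lra.
Qed.

Definition convex_comb {R : realType} (a : R) (u v : R * R) : R * R :=
  (a * u.1 + (1 - a) * v.1, a * u.2 + (1 - a) * v.2).

Lemma convex_comb_opp {R : realType} (L w : R) : `|w| <= L ->
  exists2 a, 0 <= a <= 1 & w = a * L + (1 - a) * - L.
Proof.
move=> wL; have L0 : 0 <= L := le_trans (normr_ge0 w) wL.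
move: wL; rewrite ler_norml => /andP[wL1 wL2].
have [L_eq0|L_neq0] := eqVneq L 0.
  by exists 0; [rewrite lexx ler01 | lra].
have Lp : 0 < L by rewrite lt_def L_neq0.
exists ((L + w) / (2 * L)); last by field.
by apply/andP; split; [rewrite divr_ge0; lra | rewrite ler_pdivrMr; lra].
Qed.

Section Hull.
Context {R : realType} {n : nat}.

Lemma polygon_vertex (k : 'I_n.+1) (s : bool) : polygon n (vertex R k s).
Proof.
pose w (k' : 'I_n.+1) (s' : bool) : R := ((k' == k) && (s' == s))%:R.
have sum_w (F : 'I_n.+1 -> bool -> R) :
    \sum_(k' < n.+1) \sum_(s' : bool) w k' s' * F k' s' = F k s.
  rewrite (bigD1 k) //= [X in _ + X]big1 ?addr0.
    by rewrite big_bool /w eqxx /=; clear w; case: s; rewrite /= ?mul1r ?mul0r ?addr0 ?add0r.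
  by move=> k' /negbTE k'k; rewrite big_bool /w k'k /= !mul0r addr0.
exists w; split; first by move=> ? ?; rewrite ler0n.
split; last by rewrite !sum_w; case: vertex.
by have := sum_w (fun _ _ => 1); under eq_bigr do under eq_bigr do rewrite mulr1.
Qed.

Lemma polygon_convex {u v : R * R} {a : R} : polygon n u -> polygon n v -> 0 <= a <= 1 ->
  polygon n (convex_comb a u v).
Proof.
move=> [wu [wu0 [wu1 ->]]] [wv [wv0 [wv1 ->]]] /andP[a0 a1].
exists (fun k s => a * wu k s + (1 - a) * wv k s); split.
  by move=> k s; rewrite addr_ge0 // mulr_ge0 // subr_ge0.
have comb (F G : 'I_n.+1 -> bool -> R) :
  \sum_k \sum_s (a * F k s + (1 - a) * G k s) =
    a * \sum_k \sum_s F k s + (1 - a) * \sum_k \sum_s G k s.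
  rewrite !mulr_sumr -big_split; apply: eq_bigr => k _.
  by rewrite !mulr_sumr -big_split.
split; first by rewrite comb wu1 wv1; ring.
rewrite /convex_comb /= -!comb; congr (_, _); apply: eq_bigr => k _;
  by apply: eq_bigr => s _; ring.
Qed.

End Hull.

Section ExtremePoints.
Context {R : realType}.

Lemma linear2_eq0 {a b a' b' p q : R} : a * b' != a' * b ->
  a * p + b * q = 0 -> a' * p + b' * q = 0 -> p = 0 /\ q = 0.
Proof.
move=> det E E'; rewrite -subr_eq0 in det.
have Ep : (a * b' - a' * b) * p = b' * (a * p + b * q) - b * (a' * p + b' * q) by ring.
have Eq : (a * b' - a' * b) * q = a * (a' * p + b' * q) - a' * (a * p + b * q) by ring.
rewrite E E' !mulr0 subr0 in Ep Eq.
by split; [move/eqP: Ep | move/eqP: Eq]; rewrite mulf_eq0 (negbTE det) => /eqP.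
Qed.

Lemma extreme_point_of_supports {S : set (R * R)} {x : R * R} {a b a' b' : R} :
    S x -> a * b' != a' * b ->
    (forall u, S u -> a * u.1 + b * u.2 <= a * x.1 + b * x.2) ->
    (forall u, S u -> a' * u.1 + b' * u.2 <= a' * x.1 + b' * x.2) ->
  extreme_point S x.
Proof.
move=> Sx det supp supp'; split=> // u v t Su Sv /andP[t0 t1] xE.
have on_line (a0 b0 : R) : (forall w, S w -> a0 * w.1 + b0 * w.2 <= a0 * x.1 + b0 * x.2) ->
    a0 * (u.1 - x.1) + b0 * (u.2 - x.2) = 0 /\ a0 * (v.1 - x.1) + b0 * (v.2 - x.2) = 0.
  move=> supp0; have := supp0 u Su; have := supp0 v Sv; rewrite xE /=.
  by move=> ? ?; split; nra.
have [[u1 v1] [u1' v1']] := (on_line _ _ supp, on_line _ _ supp').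
have [/subr0_eq ux1 /subr0_eq ux2] := linear2_eq0 det u1 u1'.
have [/subr0_eq vx1 /subr0_eq vx2] := linear2_eq0 det v1 v1'.
by split; apply: injective_projections.
Qed.

End ExtremePoints.

(* The vertices of the polygon are (k/n, +-height k/n), and [slope j] is the
   slope of the boundary edge from vertex j to vertex j+1 in (nT, nW) coordinates. *)
Definition angle_step (R : realType) (n : nat) : R := pi / n%:R.
Definition height (R : realType) (n j : nat) : R :=
  sin (j%:R * angle_step R n / 2) / sin (angle_step R n / 2).
Definition slope (R : realType) (n j : nat) : R := height R n j.+1 - height R n j.

Definition edge_region (R : realType) (n : nat) : set (R * R) :=
  [set tw | 0 <= tw.1 <= 1 /\ forall k, (k < n)%N ->
     `|tw.2| * n%:R <= height R n k + slope R n k * (n%:R * tw.1 - k%:R)].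

Section Polygon.
Context {R : realType} {n : nat}.
Hypothesis n_gt0 : (0 < n)%N.
Local Notation h := (angle_step R n).
Local Notation S := (height R n).
Local Notation c := (slope R n).
Local Notation Re := (@complex.Re R).

Lemma angle_stepE : n%:R * h = pi.
Proof. by rewrite /angle_step mulrC divfK // pnatr_eq0 -lt0n. Qed.

Lemma angle_step_gt0 : 0 < h.
Proof. by rewrite divr_gt0 ?pi_gt0 ?ltr0n. Qed.

Lemma angle_step_le_pi : h <= pi.
Proof. by rewrite ler_pdivrMr ?ltr0n // ler_peMr ?pi_ge0 // ler1n. Qed.

Lemma sin_angle_step_div_gt0 (k : nat) : (1 < k)%N -> 0 < sin (h / k%:R).
Proof.
move=> k1; have hp := angle_step_gt0; have := angle_step_le_pi.
have : h / k%:R < h by rewrite ltr_pdivrMr ?ltr0n ?(ltn_trans _ k1) // ltr_pMr ?ltr1n.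
have : 0 < h / k%:R by rewrite divr_gt0 ?ltr0n ?(ltn_trans _ k1).
move=> ? ? ?; apply: sin_gt0_pi; lra.
Qed.

Lemma sin_half_step_gt0 : 0 < sin (h / 2).
Proof. exact: sin_angle_step_div_gt0. Qed.

Lemma height0 : S 0 = 0.
Proof. by rewrite /height !mul0r sin0 mul0r. Qed.

Lemma height1 : S 1 = 1.
Proof. by rewrite /height mul1r divff // lt0r_neq0 // sin_half_step_gt0. Qed.

Lemma heightSS j : S j.+2 = S j + 2 * cos (j.+1%:R * h / 2).
Proof.
have s0 := sin_half_step_gt0; rewrite /height.
have -> : j.+2%:R * h / 2 = j.+1%:R * h / 2 + h / 2 by rewrite !mulrSr; ring.
have -> : j%:R * h / 2 = j.+1%:R * h / 2 - h / 2 by rewrite mulrSr; ring.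
apply: (@mulIf _ (sin (h / 2))); first exact: lt0r_neq0.
by rewrite mulrDl !divfK ?lt0r_neq0 // -sinD_subr_sinB; ring.
Qed.

Lemma slopeE j : c j = 2 * cos (j.*2.+1%:R * h / 4) * sin (h / 4) / sin (h / 2).
Proof.
rewrite /slope /height -mulrBl -sinD_subr_sinB.
by congr ((sin _ - sin _) / _); rewrite -muln2 !mulrSr natrM; field.
Qed.

Lemma slope_lt {i j : nat} : (i < j)%N -> (j < n)%N -> c j < c i.
Proof.
move=> ij jn; rewrite !slopeE.
have s2 := sin_half_step_gt0; have s4 := @sin_angle_step_div_gt0 4 isT.
have hp := angle_step_gt0; have nh := angle_stepE.
rewrite ltr_pM2r ?invr_gt0 // ltr_pM2r // ltr_pM2l //.
have jR : j.*2.+1%:R <= 2 * n%:R :> R by rewrite -natrM ler_nat; lia.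
apply: ltr_cos_pi.
- by rewrite mulr_ge0 // mulr_ge0 // ltW.
- by rewrite ltr_pM2r // ltr_pM2r // ltr_nat; lia.
- have := pi_gt0 R; nra.
Qed.

Lemma slope_le {i j : nat} : (i <= j)%N -> (j < n)%N -> c j <= c i.
Proof.
rewrite leq_eqVlt => /predU1P[-> //|ij] jn.
exact/ltW/slope_lt.
Qed.

Lemma height_ge0 j : (j <= n)%N -> 0 <= S j.
Proof.
move=> jn; rewrite /height divr_ge0 ?(ltW sin_half_step_gt0) //.
have hp := angle_step_gt0; have nh := angle_stepE; have := pi_gt0 R.
have : j%:R <= n%:R :> R by rewrite ler_nat.
have : 0 <= j%:R :> R by [].
by move=> ? ? ?; apply: sin_ge0_pi; nra.
Qed.

(* Concavity of the heights: the line through an edge dominates all vertices. *)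
Lemma height_tangent_le {j k : nat} : (j <= n)%N -> (k < n)%N ->
  S j - j%:R * c k <= S k - k%:R * c k.
Proof.
move=> jn kn.
have up d : (k + d <= n)%N -> S (k + d) - (k + d)%:R * c k <= S k - k%:R * c k.
  elim: d => [|d IH] kdn; first by rewrite addn0.
  apply: le_trans (IH _); last lia.
  have := @slope_le k (k + d) (leq_addr d k) ltac:(lia).
  by rewrite addnS /slope [_.+1%:R]mulrSr; lra.
have down d : (d <= k)%N -> S (k - d) - (k - d)%:R * c k <= S k - k%:R * c k.
  elim: d => [|d IH] dk; first by rewrite subn0.
  apply: le_trans (IH _); last lia.
  have := @slope_le (k - d.+1) k ltac:(lia) kn.
  have -> : (k - d = (k - d.+1).+1)%N by lia.
  by rewrite /slope [_.+1%:R]mulrSr; lra.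
have [kj|jk] := leqP k j.
  by have := up (j - k)%N; rewrite subnKC //; apply.
by have := down (k - j)%N; rewrite subKn ?(ltnW jk) //; apply; lia.
Qed.

Lemma sum_cos_centered k : \sum_(y < k) cos ((y%:R - (k%:R - 1) / 2) * h) = S k.
Proof.
have s0 := sin_half_step_gt0.
pose u (y : nat) := sin ((y%:R - (k%:R - 1) / 2) * h - h / 2).
have cos_telescope (y : nat) :
    cos ((y%:R - (k%:R - 1) / 2) * h) = (u y.+1 - u y) / (2 * sin (h / 2)).
  rewrite /u (_ : (y.+1%:R - (k%:R - 1) / 2) * h - h / 2 =
    (y%:R - (k%:R - 1) / 2) * h + h / 2); last by rewrite mulrSr; field.
  by rewrite sinD_subr_sinB; field; exact: lt0r_neq0.
rewrite (eq_bigr _ (fun (y : 'I_k) _ => cos_telescope y)) -mulr_suml.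
rewrite -(big_mkord xpredT (fun y => u y.+1 - u y)) telescope_sumr // /u /height.
have -> : (k%:R - (k%:R - 1) / 2) * h - h / 2 = k%:R * h / 2 by field.
have -> : (0%:R - (k%:R - 1) / 2) * h - h / 2 = - (k%:R * h / 2) by field.
by rewrite sinN; field; exact: lt0r_neq0.
Qed.

Lemma sin_pair_le (a b j : nat) (f : R) : (a <= b)%N -> (j < b - a)%N -> (b < n)%N ->
  sin ((a%:R + f) * h) + sin ((b%:R + f) * h) <= 2 * cos (j.+1%:R * h / 2).
Proof.
move=> ab jba bn.
have hp := angle_step_gt0; have nh := angle_stepE.
set M := ((a%:R + b%:R) / 2 + f) * h; set d := (b%:R - a%:R) * h / 2.
have -> : (a%:R + f) * h = M - d by rewrite /M /d; field.
have -> : (b%:R + f) * h = M + d by rewrite /M /d; field.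
rewrite sinB_addr_sinD.
have ba_le : b%:R - a%:R <= n%:R - 1 :> R by rewrite -natrB // -(natrB _ n_gt0) ler_nat; lia.
have ja_le : j.+1%:R <= b%:R - a%:R :> R by rewrite -natrB // ler_nat.
have jh0 : 0 <= j.+1%:R * h / 2.
  by apply: divr_ge0 => //; apply: mulr_ge0 => //; exact: ltW.
have d_ge : j.+1%:R * h / 2 <= d by rewrite /d ler_pM2r // ler_pM2r.
have d_le : d <= pi / 2 by rewrite /d; nra.
have cd_ge0 : 0 <= cos d by apply: cos_ge0_pihalf; have := pi_gt0 R; nra.
have cd_le : cos d <= cos (j.+1%:R * h / 2).
  by apply: ler_cos_pi => //; have := pi_gt0 R; nra.
have := sin_le1 M; nra.
Qed.

Lemma card_le_spread {B : {set 'I_n}} {a b : 'I_n} :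
  (forall i, i \in B -> (a <= i <= b)%N) -> (#|B| <= (b - a).+1)%N.
Proof.
move=> Bab; rewrite cardE -(size_map val) -addn1 -[(b - a + 1)%N](size_iota a).
apply: uniq_leq_size; first by rewrite map_inj_uniq ?enum_uniq //; exact: val_inj.
move=> _ /mapP[i iB ->]; rewrite mem_enum in iB.
by rewrite mem_iota /=; have := Bab i iB; lia.
Qed.

(* Induction removing the least and the greatest element of B, which are at
   least #|B| - 1 apart. *)
Lemma sum_sin_shifted_le (f : R) (B : {set 'I_n}) :
  \sum_(N in B) sin ((N%:R + f) * h) <= S #|B|.
Proof.
move: {2}#|B| (leqnn #|B|) => m; elim: m B => [|m IH] B Bm.
  by move: Bm; rewrite leqn0 => /eqP/cards0_eq ->; rewrite big_set0 cards0 height0.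
have [B_lt2|B_ge2] := ltnP #|B| 2.
  have [B0|B1] := posnP #|B|.
    by rewrite (cards0_eq B0) big_set0 cards0 height0.
  have /cards1P[x ->] : #|B| == 1%N by apply/eqP; lia.
  by rewrite big_set1 cards1 height1 // sin_le1.
have B_gt0 : (0 < #|B|)%N by lia.
have [b bB bmax] := eq_bigmax_cond (fun i : 'I_n => val i) B_gt0.
have [a aB amax] := eq_bigmax_cond (fun i : 'I_n => (n - val i)%N) B_gt0.
have Bab i : i \in B -> (a <= i <= b)%N.
  move=> iB; have := @leq_bigmax_cond _ (mem B) (fun i : 'I_n => val i) i iB.
  have := @leq_bigmax_cond _ (mem B) (fun i : 'I_n => (n - val i)%N) i iB.
  by rewrite bmax amax /=; have := ltn_ord i; have := ltn_ord a; lia.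
have spread := card_le_spread Bab.
have ab : a != b by apply/eqP => ab; move: spread; rewrite ab subnn; lia.
have bBa : b \in B :\ a by rewrite in_setD1 eq_sym ab.
have cardB : #|B| = (#|B :\ a :\ b|).+2.
  by rewrite (cardsD1 a B) aB (cardsD1 b (B :\ a)) bBa.
rewrite (big_setD1 a) //= (big_setD1 b) //= cardB heightSS //.
have := IH (B :\ a :\ b) ltac:(lia).
have := @sin_pair_le a b #|B :\ a :\ b| f ltac:(by have := Bab b bB; lia) ltac:(lia) (ltn_ord b).
lra.
Qed.

(* Shift y h - phi into [0, pi) modulo pi: since h = pi / n, the residues of the
   shifted indices modulo n are pairwise distinct. *)
Lemma normr_cos_shift (phi : R) : 0 <= phi <= pi *+ 2 ->
  exists (f : R) (sg : 'I_n -> 'I_n), injective sg /\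
    forall y : 'I_n, `|cos (y%:R * h - phi)| = sin (((sg y)%:R + f) * h).
Proof.
move=> /andP[phi0 phi2pi].
have hp := angle_step_gt0; have nh := angle_stepE.
have np : 0 < n%:R :> R by rewrite ltr0n.
set g := (pi / 2 - phi) / h + (2 * n)%N%:R.
have g0 : 0 <= g.
  have -> : g = (pi / 2 - phi + pi *+ 2) / h.
    by rewrite /g -nh natrM mulr2n; field; exact: lt0r_neq0.
  by rewrite divr_ge0 ?(ltW hp) //; have := pi_gt0 R; lra.
set G := Num.truncn g; set f := g - G%:R.
have f0 : 0 <= f by rewrite subr_ge0 truncn_le.
have f1 : f < 1 by have := truncnS_gt g; rewrite -/G -natr1 /f; lra.
exists f, (fun y => Ordinal (ltn_pmod (y + G) n_gt0)); split.
  move=> y y' /(congr1 val) /= /eqP; rewrite eqn_modDr !modn_small //.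
  by move/eqP/val_inj.
move=> y /=.
have E1 : (y%:R + g) * h = y%:R * h - phi + pi / 2 + pi *+ 2.
  by rewrite /g natrM mulrDl mulrDl divfK ?lt0r_neq0 // -mulrA nh; ring.
have E2 : (y%:R + g) * h = (((y + G) %% n)%:R + f) * h + pi *+ ((y + G) %/ n).
  have E : y%:R = ((y + G) %/ n)%:R * n%:R + ((y + G) %% n)%:R - G%:R :> R.
    have := congr1 (fun k : nat => k%:R : R) (divn_eq (y + G) n).
    by rewrite !natrD natrM; lra.
  by rewrite /f -mulr_natr -nh E; ring.
have := normr_sinDpin ((((y + G) %% n)%:R + f) * h) ((y + G) %/ n).
rewrite -E2 E1 normr_sinDpin sinDpihalf => ->.
apply/ger0_norm/sin_ge0_pi/andP; split.
  by apply: mulr_ge0; [apply: addr_ge0 | exact: ltW].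
have : ((y + G) %% n)%:R + 1 <= n%:R :> R by rewrite natr1 ler_nat ltn_pmod.
by rewrite -nh ler_pM2r //; lra.
Qed.

Lemma sum_abs_proj_le (J : {set 'I_n}) {t z x : R} : 0 <= t -> z ^+ 2 + x ^+ 2 <= t ^+ 2 ->
  \sum_(y in J) `|cos (y%:R * h) * z + sin (y%:R * h) * x| <= S #|J| * t.
Proof.
move=> t0 zx.
have [phi [/normr_cos_shift[f [sg [sg_inj Esg]]] [zE xE]]] := polar_coord z x.
move: zE xE; set r := Num.sqrt _ => zE xE.
have r0 : 0 <= r by apply: sqrtr_ge0.
have r2 : r ^+ 2 = z ^+ 2 + x ^+ 2 by rewrite sqr_sqrtr // addr_ge0 // sqr_ge0.
have rt : r <= t by nra.
have SJ : 0 <= S #|J| by rewrite height_ge0 // -[n in (_ <= n)%N]card_ord max_card.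
rewrite (eq_bigr (fun y : 'I_n => r * sin (((sg y)%:R + f) * h))); last first.
  move=> y _; rewrite -Esg cosB zE xE -[in RHS](ger0_norm r0) -normrM; congr `|_|; ring.
rewrite -mulr_sumr.
have : \sum_(i in J) sin (((sg i)%:R + f) * h) <= S #|J|.
  rewrite -(big_imset (fun N : 'I_n => sin ((N%:R + f) * h))); last by move=> ? ? _ _ /sg_inj.
  rewrite -(card_in_imset (f := sg)); last by move=> ? ? _ _ /sg_inj.
  exact: sum_sin_shifted_le.
nra.
Qed.

(* The positive parts live on the set J of directions where |a_y| > c_k t; bound
   their sum by sum_abs_proj_le on J and then by concavity of the heights. *)
Lemma sum_pos_part_le (t z x : R) k : 0 <= t -> z ^+ 2 + x ^+ 2 <= t ^+ 2 -> (k < n)%N ->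
  \sum_(y < n) Num.max 0 (`|cos (y%:R * h) * z + sin (y%:R * h) * x| - c k * t)
    <= (S k - k%:R * c k) * t.
Proof.
move=> t0 zx kn.
pose a (y : 'I_n) : R := `|cos (y%:R * h) * z + sin (y%:R * h) * x|.
set J := [set y : 'I_n | c k * t < a y].
have -> : \sum_(y < n) Num.max 0 (a y - c k * t) = \sum_(y in J) (a y - c k * t).
  rewrite [RHS]big_mkcond /=; apply: eq_bigr => y _; rewrite inE.
  by case: ltP => H; [rewrite max_r | rewrite max_l]; lra.
rewrite sumrB sumr_const -mulr_natl.
have J_le : (#|J| <= n)%N by rewrite -[n in (_ <= n)%N]card_ord max_card.
have := sum_abs_proj_le J t0 zx.
have := ler_wpM2r t0 (height_tangent_le J_le kn).
nra.
Qed.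

Lemma sum_response_le {t z x : R} {q d : 'I_n -> R} {k : nat} :
    0 <= t -> z ^+ 2 + x ^+ 2 <= t ^+ 2 -> (k < n)%N ->
    (forall y, 0 <= q y <= 1) -> (forall y, `|d y| <= q y) ->
  \sum_(y < n) d y * (cos (y%:R * h) * z + sin (y%:R * h) * x)
    <= c k * t * \sum_(y < n) q y + (S k - k%:R * c k) * t.
Proof.
move=> t0 zx kn q01 dq.
have term_le (y : 'I_n) : d y * (cos (y%:R * h) * z + sin (y%:R * h) * x) <=
    c k * t * q y + Num.max 0 (`|cos (y%:R * h) * z + sin (y%:R * h) * x| - c k * t).
  set a := cos _ * z + _.
  have da : d y * a <= q y * `|a|.
    by rewrite (le_trans (ler_norm _)) // normrM ler_wpM2r.
  have /andP[q0 q1] := q01 y; have a0 := normr_ge0 a.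
  by case: (leP 0 (`|a| - c k * t)) => ?; nra.
apply: le_trans (ler_sum _ (fun y _ => term_le y)) _.
by rewrite big_split /= -mulr_sumr lerD2l sum_pos_part_le.
Qed.

Lemma theta_angle_step (y : 'I_n) : theta R y = y%:R * h.
Proof. by rewrite /theta mulrA. Qed.

Lemma conclusive_weight_bounds {m : nat} {t : 'I_m -> R} {q : 'I_n -> 'I_m -> R} :
    (forall l, 0 <= t l) -> \sum_l t l = 1 -> (forall y l, 0 <= q y l <= 1) ->
  0 <= \sum_(y < n) \sum_(l < m) q y l * t l <= n%:R.
Proof.
move=> t_ge0 t1 q01; apply/andP; split.
  rewrite sumr_ge0 // => y _; rewrite sumr_ge0 // => l _.
  by rewrite mulr_ge0 //; case/andP: (q01 y l).
rewrite -[in leRHS](card_ord n) -sumr_const ler_sum // => y _.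
by rewrite -t1 ler_sum // => l _; have /andP[? ?] := q01 y l; have := t_ge0 l; nra.
Qed.

Lemma mixture_response_le {m : nat} {t z x : 'I_m -> R} {q d : 'I_n -> 'I_m -> R} {k : nat} :
    (forall l, 0 <= t l /\ z l ^+ 2 + x l ^+ 2 <= t l ^+ 2) -> \sum_l t l = 1 ->
    (forall y l, 0 <= q y l <= 1) -> (forall y l, `|d y l| <= q y l) -> (k < n)%N ->
  \sum_(y < n) \sum_(l < m) d y l * (cos (y%:R * h) * z l + sin (y%:R * h) * x l)
    <= S k + c k * (\sum_(y < n) \sum_(l < m) q y l * t l - k%:R).
Proof.
move=> bloch t1 q01 dq kn.
have step l := sum_response_le (bloch l).1 (bloch l).2 kn (q01^~ l) (dq^~ l).
rewrite exchange_big [X in c k * (X - _)]exchange_big /=.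
apply: le_trans (ler_sum _ (fun l _ => step l)) _.
rewrite big_split /= -mulr_sumr t1 mulr1.
have -> : \sum_l c k * t l * \sum_y q y l = c k * \sum_l \sum_y q y l * t l.
  rewrite mulr_sumr; apply: eq_bigr => l _; rewrite mulr_sumr mulr_sumr.
  by apply: eq_bigr => y _; ring.
lra.
Qed.

Lemma attainable_sub_edge_region : (attainable n `<=` edge_region R n)%classic.
Proof.
move=> _ [m [rho [p [[rho_psd [tr_rho [p_ge0 p_sum1]]] ->]]]].
pose t l := Re (rho l ord0 ord0) + Re (rho l ord_max ord_max).
pose z l := Re (rho l ord0 ord0) - Re (rho l ord_max ord_max).
pose x l := Re (rho l ord0 ord_max) + Re (rho l ord_max ord0).
pose q y l := p y out0 l + p y out1 l.
have trE l : Re (\tr (rho l)) = t l by rewrite mxtrace2 ReD.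
have t1 : \sum_l t l = 1 by rewrite -(eq_bigr _ (fun l _ => trE l)) -Re_sum tr_rho.
have bloch l : 0 <= t l /\ z l ^+ 2 + x l ^+ 2 <= t l ^+ 2 := psd2_bloch (rho_psd l).
have resp y l := outcome_prob_bounds (fun b => p_ge0 y b l) (p_sum1 y l).
have q01 y l : 0 <= q y l <= 1 := (resp y l).1.
have dq y l : `|p y out0 l - p y out1 l| <= q y l := (resp y l).2.
have dNq y l : `|- (p y out0 l - p y out1 l)| <= q y l by rewrite normrN.
have -> : Tn (assemblage rho p) = n%:R^-1 * \sum_(y < n) \sum_(l < m) q y l * t l.
  by rewrite Tn_assemblage; under eq_bigr do under eq_bigr do rewrite trE.
have -> : Wn (assemblage rho p) = n%:R^-1 * \sum_(y < n) \sum_(l < m)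
    (p y out0 l - p y out1 l) * (cos (y%:R * h) * z l + sin (y%:R * h) * x l).
  rewrite Wn_assemblage.
  by under eq_bigr do under eq_bigr do rewrite Re_mxtrace_obs theta_angle_step.
have n_gt0R : 0 < n%:R :> R by rewrite ltr0n.
have /andP[TS_ge0 TS_le] := conclusive_weight_bounds (fun l => (bloch l).1) t1 q01.
split; first by rewrite mulr_ge0 ?invr_ge0 ?ler0n //= ler_pdivrMl // mulr1.
move=> k kn /=; rewrite normrM ger0_norm ?invr_ge0 ?ler0n // mulrAC mulVf ?lt0r_neq0 //.
rewrite mul1r mulrA mulfV ?lt0r_neq0 // mul1r ler_norml (mixture_response_le bloch t1 q01 dq kn).
have /= := mixture_response_le bloch t1 q01 dNq kn.
under eq_bigr do under eq_bigr do rewrite mulNr.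
under eq_bigr do rewrite sumrN.
by rewrite sumrN andbT; lra.
Qed.

Lemma vertexE (k : 'I_n.+1) (s : bool) :
  vertex R k s = (k%:R / n%:R, (if s then 1 else -1) * S k / n%:R).
Proof.
have s0 := sin_half_step_gt0; have n0 : n%:R != 0 :> R by rewrite pnatr_eq0 -lt0n.
congr (_, _); rewrite /height /angle_step.
rewrite (_ : pi / 2 * (k%:R / n%:R) = k%:R * (pi / n%:R) / 2); last by field.
rewrite (_ : pi / (2 * n%:R) = pi / n%:R / 2); last by field.
by field; rewrite n0 lt0r_neq0.
Qed.

Lemma edge_of_abscissa (T : R) : 0 <= T <= 1 ->
  exists2 k : nat, (k < n)%N & k%:R <= n%:R * T <= k.+1%:R.
Proof.
move=> /andP[T0 T1]; have nT0 : 0 <= n%:R * T by rewrite mulr_ge0.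
have [nT_lt|nT_ge] := ltP (n%:R * T) n%:R.
  exists (Num.truncn (n%:R * T)); first by rewrite truncn_lt_nat.
  by rewrite truncn_le nT0 ltW // truncnS_gt.
exists n.-1; first by rewrite prednK.
rewrite prednK // (le_trans _ nT_ge) ?ler_nat ?leq_pred //=.
by rewrite -[leRHS]mulr1 ler_wpM2l.
Qed.

Lemma edge_region_sub_polygon : (edge_region R n `<=` polygon n)%classic.
Proof.
move=> [T W] [] /= /edge_of_abscissa[k kn /andP[kT Tk]] W_le.
have np : 0 < n%:R :> R by rewrite ltr0n.
pose b := n%:R * T - k%:R.
have b01 : 0 <= b <= 1 by rewrite -natr1 in Tk; rewrite /b; apply/andP; split; lra.
pose L := (S k + c k * b) / n%:R.
have [a a01 WE] : exists2 a, 0 <= a <= 1 & W = a * L + (1 - a) * - L.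
  by apply: convex_comb_opp; rewrite /L ler_pdivlMr // W_le.
have hull_edge (s : bool) : polygon n (T, (if s then 1 else -1) * L).
  have := polygon_convex (polygon_vertex (@Ordinal n.+1 k (leq_trans kn (leqnSn n))) s)
    (polygon_vertex (@Ordinal n.+1 k.+1 kn) s) (a := 1 - b) ltac:(lra).
  rewrite /convex_comb !vertexE /= /L /b /slope -natr1; congr (polygon n (_, _)); field;
  exact: lt0r_neq0.
have := polygon_convex (hull_edge true) (hull_edge false) a01.
by rewrite /convex_comb /= WE; congr (polygon n (_, _)); ring.
Qed.

(* A pure state whose Bloch vector bisects the directions theta_0, ..., theta_(k-1). *)
Definition bisector (k : nat) (i : 'I_2) : R :=
  let a := (k%:R - 1) * h / 4 in if i == ord0 then cos a else sin a.

Definition vertex_state (w : R) (k : nat) : 'M[R[i]]_2 :=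
  \matrix_(i, j) (w * bisector k i * bisector k j)%:C%C.

Definition vertex_outcome (k : nat) (s : bool) (y : 'I_n) : 'I_3 :=
  if (y < k)%N then (if s then out0 else out1) else ord_max.

(* The hidden states of a point of the hull are labelled by the vertices (k, s). *)
Local Notation hull_index := 'I_#|{: 'I_n.+1 * bool}|.

Definition hull_state (w : 'I_n.+1 -> bool -> R) (l : hull_index) : 'M[R[i]]_2 :=
  vertex_state (w (enum_val l).1 (enum_val l).2) (enum_val l).1.

Definition hull_response (y : 'I_n) (b : 'I_3) (l : hull_index) : R :=
  (b == vertex_outcome (enum_val l).1 (enum_val l).2 y)%:R.

Lemma sum_hull_index {V : nmodType} (F : 'I_n.+1 -> bool -> V) :
  \sum_(l : hull_index) F (enum_val l).1 (enum_val l).2 = \sum_k \sum_s F k s.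
Proof. by rewrite -(big_enum_val (fun ks => F ks.1 ks.2)) pair_bigA. Qed.

Lemma mxtrace_vertex_state w k : \tr (vertex_state w k) = w%:C%C.
Proof.
rewrite mxtrace2 !mxE /bisector /= -rmorphD /= -!mulrA -mulrDr.
by rewrite -!expr2 cos2Dsin2 mulr1.
Qed.

Lemma Re_mxtrace_obs_vertex_state (y : 'I_n) w k :
  Re (\tr (obs R y *m vertex_state w k)) = w * cos ((y%:R - (k%:R - 1) / 2) * h).
Proof.
rewrite Re_mxtrace_obs theta_angle_step !mxE /bisector /=.
set a := (k%:R - 1) * h / 4.
have -> : (y%:R - (k%:R - 1) / 2) * h = y%:R * h - a *+ 2 by rewrite /a mulr2n; field.
rewrite cosB cos_mulr2n sin_mulr2n.
by have := cos2Dsin2 a; rewrite !mulr2n => <-; ring.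
Qed.

Lemma hull_model (w : 'I_n.+1 -> bool -> R) : (forall k s, 0 <= w k s) ->
  \sum_k \sum_s w k s = 1 -> LHS_model (hull_state w) hull_response.
Proof.
move=> w_ge0 w_sum1; split; first by move=> l; apply: psd_real_outer.
split.
  rewrite (eq_bigr _ (fun l _ => mxtrace_vertex_state _ _)).
  rewrite (sum_hull_index (fun k s => (w k s)%:C%C)) -[1]/(1%:C%C) -w_sum1 rmorph_sum.
  by apply: eq_bigr => k _; rewrite rmorph_sum.
split; first by move=> y b l; rewrite ler0n.
move=> y l; rewrite /hull_response /vertex_outcome.
rewrite (bigD1 (vertex_outcome (enum_val l).1 (enum_val l).2 y)) //= eqxx big1 ?addr0 //.
by move=> b /negbTE ->.
Qed.

Lemma sum_hull_response_add (l : hull_index) (F : 'I_n -> R) :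
  \sum_(y < n) (hull_response y out0 l + hull_response y out1 l) * F y
    = \sum_(y < n) (if (y < (enum_val l).1)%N then F y else 0).
Proof.
apply: eq_bigr => y _; rewrite /hull_response /vertex_outcome.
by case: ifP => _; case: (enum_val l).2; rewrite /= ?addr0 ?add0r ?mul1r ?mul0r.
Qed.

Lemma sum_hull_response_sub (l : hull_index) (F : 'I_n -> R) :
  \sum_(y < n) (hull_response y out0 l - hull_response y out1 l) * F y
    = (if (enum_val l).2 then 1 else -1) *
      \sum_(y < n) (if (y < (enum_val l).1)%N then F y else 0).
Proof.
rewrite mulr_sumr; apply: eq_bigr => y _; rewrite /hull_response /vertex_outcome.
by case: ifP => _; case: (enum_val l).2; rewrite /= ?subr0 ?sub0r ?mulr0 ?mul1r ?mulN1r ?mul0r.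
Qed.

Lemma Tn_hull (w : 'I_n.+1 -> bool -> R) : Tn (assemblage (hull_state w) hull_response) =
  \sum_k \sum_s w k s * (vertex R k s).1.
Proof.
rewrite Tn_assemblage exchange_big /= mulr_sumr.
rewrite -(sum_hull_index (fun k s => w k s * (vertex R k s).1)); apply: eq_bigr => l _.
rewrite vertexE sum_hull_response_add /hull_state mxtrace_vertex_state /=.
rewrite (sum_ord_ltn (fun=> w _ _)); last by rewrite -ltnS.
rewrite sumr_const card_ord -mulr_natr.
by field; rewrite pnatr_eq0 -lt0n.
Qed.

Lemma Wn_hull (w : 'I_n.+1 -> bool -> R) : Wn (assemblage (hull_state w) hull_response) =
  \sum_k \sum_s w k s * (vertex R k s).2.
Proof.
rewrite Wn_assemblage exchange_big /= mulr_sumr.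
rewrite -(sum_hull_index (fun k s => w k s * (vertex R k s).2)); apply: eq_bigr => l _.
rewrite vertexE /=; under eq_bigr do rewrite Re_mxtrace_obs_vertex_state.
rewrite sum_hull_response_sub.
rewrite (sum_ord_ltn (fun y => w _ _ * cos ((y%:R - ((enum_val l).1%:R - 1) / 2) * h)));
  last by rewrite -ltnS.
rewrite -mulr_sumr sum_cos_centered.
by case: (enum_val l).2 => /=; ring.
Qed.

Lemma polygon_sub_attainable : (@polygon R n `<=` attainable n)%classic.
Proof.
move=> _ [w [w_ge0 [w_sum1 ->]]].
exists #|{: 'I_n.+1 * bool}|, (hull_state w), hull_response.
by rewrite Tn_hull Wn_hull; split=> //; apply: hull_model.
Qed.

Local Notation sgn s := (if s then 1 else -1 : R).

Lemma edge_region_le {u : R * R} {j : nat} (s : bool) : edge_region R n u -> (j < n)%N ->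
  - (c j * n%:R) * u.1 + sgn s * n%:R * u.2 <= S j - j%:R * c j.
Proof.
move=> [_ u_le] jn; have := u_le j jn.
have : sgn s * u.2 <= `|u.2|.
  by case: s; rewrite ?mul1r ?mulN1r ?ler_norm // -normrN ler_norm.
have : 0 < n%:R :> R by rewrite ltr0n.
by move=> ? ? ?; nra.
Qed.

Lemma vertex_edge_value (k : 'I_n.+1) s j :
  - (c j * n%:R) * (vertex R k s).1 + sgn s * n%:R * (vertex R k s).2 = S k - k%:R * c j.
Proof.
rewrite vertexE /=; have n0 : n%:R != 0 :> R by rewrite pnatr_eq0 -lt0n.
by case: s; field.
Qed.

Lemma edge_support (k : 'I_n.+1) s j : (j < n)%N -> k = j :> nat \/ k = j.+1 :> nat ->
  forall u, attainable n u -> - (c j * n%:R) * u.1 + sgn s * n%:R * u.2 <=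
    - (c j * n%:R) * (vertex R k s).1 + sgn s * n%:R * (vertex R k s).2.
Proof.
move=> jn kj u /attainable_sub_edge_region u_reg.
rewrite vertex_edge_value (le_trans (edge_region_le s u_reg jn)) //.
by case: kj => ->; rewrite // /slope -natr1; lra.
Qed.

Lemma vertex_extreme (k : 'I_n.+1) (s : bool) : extreme_point (attainable n) (vertex R k s).
Proof.
have V_att : attainable n (vertex R k s) by apply/polygon_sub_attainable/polygon_vertex.
have sgn_n0 : sgn s * n%:R != 0.
  by rewrite mulf_neq0 ?pnatr_eq0 -?lt0n //; case: (s); rewrite ?oppr_eq0 oner_eq0.
have [k0|k_gt0] := posnP k.
  apply: (extreme_point_of_supports (a := -1) (b := 0) V_att _ _
    (edge_support k s 0 n_gt0 (or_introl k0))); first by rewrite mulr0 mulN1r oppr_eq0.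
  by move=> u /attainable_sub_edge_region[/andP[u1_ge0 _] _]; rewrite vertexE k0 /=; lra.
have [kn|nk] := ltnP k n.
  have kE : k = k.-1.+1 :> nat by rewrite prednK.
  apply: (extreme_point_of_supports V_att _
    (edge_support k s k.-1 (leq_ltn_trans (leq_pred k) kn) (or_intror kE))
    (edge_support k s k kn (or_introl erefl))).
  have nsgn_n0 : n%:R * (sgn s * n%:R) != 0 by rewrite mulf_neq0 ?pnatr_eq0 -?lt0n.
  rewrite !mulNr eqr_opp -!mulrA (inj_eq (mulIf nsgn_n0)) gt_eqF //.
  by apply: slope_lt; rewrite ?ltn_predL.
have kE : k = n.-1.+1 :> nat by rewrite prednK //; apply/anti_leq; rewrite nk andbT -ltnS ltn_ord.
have pn : (n.-1 < n)%N by rewrite ltn_predL.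
apply: (extreme_point_of_supports (a := 1) (b := 0) V_att _ _
  (edge_support k s n.-1 pn (or_intror kE))).
  by rewrite mulr0 mul1r.
move=> u /attainable_sub_edge_region[/andP[_ u1_le1] _].
by rewrite vertexE kE prednK //= mulfV ?pnatr_eq0 -?lt0n //; lra.
Qed.

End Polygon.

Theorem mainTheorem7 (R : realType) (n : nat) (hn : (0 < n)%N) :
  @attainable R n = @polygon R n /\
  (forall (k : 'I_n.+1) (s : bool), extreme_point (@attainable R n) (@vertex R n k s)).
Proof.
split; last by move=> k s; exact: vertex_extreme.
apply/seteqP; split; last exact: polygon_sub_attainable.
by move=> u /(attainable_sub_edge_region hn); apply: edge_region_sub_polygon.
Qed.
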